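(* Let $\mathcal{C}$ and $\mathcal{D}$ be categories, let $R$ be a monad on the product category $\mathcal{C}\times\mathcal{D}$ (with unit $\eta$ and Kleisli extension $\mathrm{bind}$), and let $A\in\mathcal{D}$. For $X\in\mathcal{C}$ put $R_{A,1}(X):=\mathrm{pr}_{\mathcal{C}}(R(X,A))$ and $\eta'_X:=\mathrm{pr}_{\mathcal{C}}(\eta_{(X,A)}):X\to R_{A,1}(X)$. For $X,X'\in\mathcal{C}$ and a morphism $f:X\to R_{A,1}(X')$, put $$\mathrm{bind}'(f):=\mathrm{pr}_{\mathcal{C}}\big(\mathrm{bind}(f,\mathrm{pr}_{\mathcal{D}}(\eta_{(X',A)}))\big):R_{A,1}(X)\to R_{A,1}(X'),$$ where $(f,\mathrm{pr}_{\mathcal{D}}(\eta_{(X',A)})):(X,A)\to R(X',A)$ is the morphism of $\mathcal{C}\times\mathcal{D}$ with the indicated components. Then $(R_{A,1},\eta',\mathrm{bind}')$ is a monad on $\mathcal{C}$, i.e. $\mathrm{bind}'(\eta'_X)=\mathrm{id}$, $\mathrm{bind}'(f)\circ\eta'_X=f$, and $\mathrm{bind}'(\mathrm{bind}'(g)\circ f)=\mathrm{bind}'(g)\circ\mathrm{bind}'(f)$ for all $f:X\to R_{A,1}(X')$, $g:X'\to R_{A,1}(X'')$.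
   Context: A monad on a category $\mathcal{E}$ is described in Kleisli form: an object $R(X)$ for each object $X$, morphisms $\eta_X:X\to R(X)$, and for each $f:X\to R(Y)$ a morphism $\mathrm{bind}(f):R(X)\to R(Y)$, such that $\mathrm{bind}(\eta_X)=\mathrm{id}_{R(X)}$, $\mathrm{bind}(f)\circ\eta_X=f$, and $\mathrm{bind}(\mathrm{bind}(g)\circ f)=\mathrm{bind}(g)\circ\mathrm{bind}(f)$ (here $\circ$ is the usual composition, $g\circ f$ meaning first $f$ then $g$). $\mathrm{pr}_{\mathcal{C}},\mathrm{pr}_{\mathcal{D}}$ are the projection functors of $\mathcal{C}\times\mathcal{D}$. *)

Set Implicit Arguments.
Set Universe Polymorphism.

Record Category := {
  Ob : Type;
  Hom : Ob -> Ob -> Type;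
  cid : forall X, Hom X X;
  comp : forall X Y Z, Hom Y Z -> Hom X Y -> Hom X Z;
  comp_id_l : forall X Y (f : Hom X Y), comp (cid Y) f = f;
  comp_id_r : forall X Y (f : Hom X Y), comp f (cid X) = f;
  comp_assoc : forall X Y Z W (f : Hom X Y) (g : Hom Y Z) (h : Hom Z W),
      comp h (comp g f) = comp (comp h g) f
}.

Arguments cid {c} X.
Arguments comp {c X Y Z} _ _.

Definition prod_Hom (C D : Category) (p q : Ob C * Ob D) : Type :=
  (Hom C (fst p) (fst q) * Hom D (snd p) (snd q))%type.

Definition prod_cid (C D : Category) (p : Ob C * Ob D) : prod_Hom C D p p :=
  (cid (fst p), cid (snd p)).

Definition prod_comp (C D : Category) (p q r : Ob C * Ob D)
  (g : prod_Hom C D q r) (f : prod_Hom C D p q) : prod_Hom C D p r :=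
  (comp (fst g) (fst f), comp (snd g) (snd f)).

Lemma prod_comp_id_l (C D : Category) p q (f : prod_Hom C D p q) :
  prod_comp (prod_cid C D q) f = f.
Proof. destruct f; unfold prod_comp, prod_cid; simpl; now rewrite !comp_id_l. Qed.

Lemma prod_comp_id_r (C D : Category) p q (f : prod_Hom C D p q) :
  prod_comp f (prod_cid C D p) = f.
Proof. destruct f; unfold prod_comp, prod_cid; simpl; now rewrite !comp_id_r. Qed.

Lemma prod_comp_assoc (C D : Category) p q r s (f : prod_Hom C D p q)
  (g : prod_Hom C D q r) (h : prod_Hom C D r s) :
  prod_comp h (prod_comp g f) = prod_comp (prod_comp h g) f.
Proof. unfold prod_comp; simpl; now rewrite !comp_assoc. Qed.

Definition prod_cat (C D : Category) : Category :=
  {| Ob := (Ob C * Ob D)%type;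
     Hom := prod_Hom C D;
     cid := prod_cid C D;
     comp := prod_comp (C:=C) (D:=D);
     comp_id_l := prod_comp_id_l (C:=C) (D:=D);
     comp_id_r := prod_comp_id_r (C:=C) (D:=D);
     comp_assoc := prod_comp_assoc (C:=C) (D:=D) |}.

Record KleisliMonad (E : Category) := {
  MR : Ob E -> Ob E;
  Meta : forall X, Hom E X (MR X);
  Mbind : forall X Y, Hom E X (MR Y) -> Hom E (MR X) (MR Y);
  Mbind_eta : forall X, Mbind X X (Meta X) = cid (MR X);
  Mbind_comp_eta : forall X Y (f : Hom E X (MR Y)), comp (Mbind X Y f) (Meta X) = f;
  Mbind_bind : forall X Y Z (f : Hom E X (MR Y)) (g : Hom E Y (MR Z)),
      Mbind X Z (comp (Mbind Y Z g) f) = comp (Mbind Y Z g) (Mbind X Y f)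
}.

Arguments MR {E} _ _.
Arguments Meta {E} _ X.
Arguments Mbind {E} _ {X Y} _.

Section Restrict.
Variables (C D : Category) (M : KleisliMonad (prod_cat C D)) (A : Ob D).

Definition R_A1 (X : Ob C) : Ob C := fst (MR M (X, A)).

Definition eta' (X : Ob C) : Hom C X (R_A1 X) := fst (Meta M (X, A)).

Definition bind' (X X' : Ob C) (f : Hom C X (R_A1 X')) : Hom C (R_A1 X) (R_A1 X') :=
  fst (@Mbind _ M (X, A) (X', A) (f, snd (Meta M (X', A)))).
End Restrict.

Arguments R_A1 {C D} M A X.
Arguments eta' {C D} M A X.
Arguments bind' {C D} M A {X X'} f.

From Corelib Require Import ssreflect.

(* A morphism f : X -> R_{A,1}(X') of C is lifted to the morphism (f, pr_D eta) of
   C x D.  Such lifts are closed under Kleisli composition, because the D-component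
   of bind(G) o (f, pr_D eta) is pr_D (bind(G) o eta) = pr_D G; so the three monad
   laws for bind' are the first components of those for bind. *)

Lemma snd_bind_comp_eta {C D : Category} (M : KleisliMonad (prod_cat C D))
    {p q : Ob C * Ob D} (g : Hom (prod_cat C D) p (MR M q)) :
  comp (snd (Mbind M g)) (snd (Meta M p)) = snd g.
Proof. exact (f_equal snd (Mbind_comp_eta M p q g)). Qed.

Section KleisliLift.
Variables (C D : Category) (M : KleisliMonad (prod_cat C D)) (A : Ob D).

Definition klift (X X' : Ob C) (f : Hom C X (R_A1 M A X')) :
    Hom (prod_cat C D) (X, A) (MR M (X', A)) :=
  (f, snd (Meta M (X', A))).

Arguments klift {X X'} f.

Lemma bind'E (X X' : Ob C) (f : Hom C X (R_A1 M A X')) :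
  bind' M A f = fst (Mbind M (klift f)).
Proof. by []. Qed.

Lemma klift_eta' (X : Ob C) : klift (eta' M A X) = Meta M (X, A).
Proof. by rewrite /klift /eta'; case: (Meta M (X, A)). Qed.

Lemma comp_bind_klift (X X' X'' : Ob C) (f : Hom C X (R_A1 M A X'))
    (g : Hom C X' (R_A1 M A X'')) :
  comp (Mbind M (klift g)) (klift f) = klift (comp (bind' M A g) f).
Proof.
by rewrite /= /prod_comp /klift /= (snd_bind_comp_eta M (klift g)).
Qed.

End KleisliLift.

Arguments klift {C D} M A {X X'} f.

Theorem lemma2p2 (C D : Category) (M : KleisliMonad (prod_cat C D)) (A : Ob D) :
  (forall X : Ob C, bind' M A (eta' M A X) = cid (R_A1 M A X)) /\
  (forall (X X' : Ob C) (f : Hom C X (R_A1 M A X')),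
      comp (bind' M A f) (eta' M A X) = f) /\
  (forall (X X' X'' : Ob C) (f : Hom C X (R_A1 M A X')) (g : Hom C X' (R_A1 M A X'')),
      bind' M A (comp (bind' M A g) f) = comp (bind' M A g) (bind' M A f)).
Proof.
split; [|split].
- by move=> X; rewrite bind'E klift_eta' Mbind_eta.
- move=> X X' f.
  exact: (f_equal fst (Mbind_comp_eta M (X, A) (X', A) (klift M A f))).
- move=> X X' X'' f g.
  by rewrite [LHS]bind'E -comp_bind_klift Mbind_bind.
Qed.
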